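(* Let $\pi\colon\mathcal W\to W$ be a continuous proper surjection between locally compact Hausdorff spaces, $C$ a co-meagre subset of $W$, and $\iota\colon C\to\mathcal W$ a continuous map with $\pi\circ\iota=\mathrm{id}_C$ and $\iota(C)$ dense in $\mathcal W$. Then $\pi$ and $\iota$ are weakly open.
   Context: A continuous map $f\colon Y\to X$ is weakly open if $f^{-1}(U)$ is dense in $Y$ whenever $U$ is open and dense in $X$. A set is co-meagre if its complement is a countable union of sets whose closures have empty interior. *)

From HB Require Import structures.
From mathcomp Require Import all_boot all_order all_algebra.
From mathcomp Require Import all_classical all_reals all_analysis.
Set Implicit Arguments. Unset Strict Implicit. Unset Printing Implicit Defensive.
Import Order.TTheory GRing.Theory Num.Theory.
Local Open Scope classical_set_scope.

Definition weakly_open (Y X : topologicalType) (f : Y -> X) : Prop :=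
  continuous f /\
  forall U : set X, open U -> dense U -> dense (f @^-1` U).

Definition proper_map (Y X : topologicalType) (f : Y -> X) : Prop :=
  forall K : set X, compact K -> compact (f @^-1` K).

Definition nowhere_dense (T : topologicalType) (A : set T) : Prop :=
  interior (closure A) = set0.

Definition comeagre (T : topologicalType) (C : set T) : Prop :=
  exists F : nat -> set T,
    (forall n, nowhere_dense (F n)) /\ ~` C = \bigcup_n F n.

From HB Require Import structures.
From mathcomp Require Import all_boot all_order all_algebra.
From mathcomp Require Import all_classical all_reals all_analysis.
Local Open Scope classical_set_scope.

(* A locally compact Hausdorff space is a Baire space: inside a nonempty open
   set choose nonempty open sets U_0, U_1, ... with compact closures, the
   closure of U_(n+1) lying in U_n and in the (n+1)-st dense open set; the
   nested compact closures have a common point.  Hence the co-meagre set C is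
   dense.

   For pi: a nonempty open O of WW contains some iota c, so iota⁻¹(O) = C ∩ G
   with G open and nonempty; G ∩ U is nonempty open, hence meets the dense set
   C at some p, and iota p lies in O ∩ pi⁻¹(U).  For iota: given an open set
   C ∩ G containing c, the open set pi⁻¹(G) ∋ iota c meets the dense U, and
   pi⁻¹(G) ∩ U meets iota(C) at some iota d; then d = pi (iota d) lies in C ∩ G. *)

Definition baire_space (T : topologicalType) : Prop :=
  forall D : nat -> set T, (forall n, open (D n)) -> (forall n, dense (D n)) ->
  dense (\bigcap_n D n).

Lemma nowhere_dense_closureC_dense (T : topologicalType) (A : set T) :
  nowhere_dense A -> dense (~` closure A).
Proof.
move=> nA O [x Ox] oO; apply/set0P/negP => /eqP OA.
have sOA : O `<=` closure A.
  by move=> y Oy; apply: contrapT => nAy; rewrite -[False]/(set0 y) -OA.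
have : interior (closure A) x by apply: interiorS sOA _ _; rewrite (interior_id O).1.
by rewrite nA.
Qed.

Lemma baire_comeagre_dense {T : topologicalType} (C : set T) :
  baire_space T -> comeagre C -> dense C.
Proof.
move=> bT [F [nF eC]] O O0 oO.
have [||p [Op Dp]] := bT (fun n => ~` closure (F n)) _ _ O O0 oO.
- by move=> n; exact/closed_openC/closed_closure.
- by move=> n; exact: nowhere_dense_closureC_dense.
exists p; split => //; apply: contrapT => nCp.
have : (~` C) p by [].
by rewrite eC => -[n _ /subset_closure]; exact: Dp.
Qed.

Lemma compact_nested_closed_cap (T : topologicalType) (K : nat -> set T) :
  (forall n, closed (K n)) -> (forall n, K n !=set0) ->
  (forall n, K n.+1 `<=` K n) -> compact (K 0) -> exists p, forall n, K n p.
Proof.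
move=> Kcl Kn0 Kdec cK.
have Kle m n : (n <= m)%N -> K m `<=` K n.
  elim: m => [|m IH]; first by rewrite leqn0 => /eqP ->.
  by rewrite leq_eqVlt ltnS => /predU1P [-> //|/IH]; exact: subset_trans.
pose F := filter_from [set: nat] K.
have FF : ProperFilter F.
  apply: filter_from_proper => [|n _]; last exact: Kn0.
  apply: filter_from_filter; first by exists 0%N.
  move=> i j _ _; exists (maxn i j) => // y Ky.
  by split; apply: Kle Ky; rewrite ?leq_maxl ?leq_maxr.
have [p [_ clp]] := cK F FF (ex_intro2 _ _ 0%N I (@subset_refl _ _)).
exists p => n; rewrite [K n](closure_id (K n)).1 // => B Bp.
exact: clp (ex_intro2 _ _ n I (@subset_refl _ _)) Bp.
Qed.

Section LocallyCompactHausdorff.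
Context {T : topologicalType}.
Hypotheses (hT : hausdorff_space T) (lcT : locally_compact [set: T]).

Lemma open_subset_compact_closure (A : set T) : open A -> A !=set0 ->
  exists B : set T, [/\ open B, B !=set0, compact (closure B) & closure B `<=` A].
Proof.
move=> oA [x Ax].
have := lcT x I; rewrite withinET => -[P Px [cP _]].
have nAP : nbhs x (A `&` P) by apply: filterI => //; exact: open_nbhs_nbhs.
have [N Nx NAP] := compact_regular hT cP Px nAP.
have clN_AP : closure (interior N) `<=` A `&` P.
  by move=> y /(closureS (@interior_subset _ N)) /NAP.
exists (interior N); split.
- exact: open_interior.
- by exists x; exact: nbhs_singleton (nbhs_interior Nx).
- apply: (subclosed_compact _ cP); first exact: closed_closure.
  by move=> y /clN_AP [].
- by move=> y /clN_AP [].
Qed.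

Lemma locally_compact_hausdorff_baire : baire_space T.
Proof.
move=> D oD dD V V0 oV.
have step (nA : nat * set T) : exists B : set T, open nA.2 -> nA.2 !=set0 ->
    [/\ open B, B !=set0, compact (closure B) & closure B `<=` nA.2 `&` D nA.1].
  have [[oA A0]|] := pselect (open nA.2 /\ nA.2 !=set0); last first.
    by move=> nA0; exists set0 => oA A0; exfalso; exact: nA0.
  have [B HB] := open_subset_compact_closure _ (openI oA (oD nA.1)) (dD _ _ A0 oA).
  by exists B.
have [g Hg] := choice step.
pose U := fix U n := if n is m.+1 then g (n, U m) else g (0%N, V).
have HU n : [/\ open (U n), U n !=set0, compact (closure (U n)) &
    closure (U n) `<=` (if n is m.+1 then U m else V) `&` D n].
  by elim: n => [|n [oUn Un0 _ _]]; [exact: (Hg (0%N, V)) | exact: (Hg (n.+1, U n))].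
have [||||p Kp] := @compact_nested_closed_cap T (fun n => closure (U n)).
- by move=> n; exact: closed_closure.
- by move=> n; have [_ [y Uy] _ _] := HU n; exists y; exact: subset_closure.
- by move=> n y; have [_ _ _ sub] := HU n.+1; move=> /sub [/subset_closure].
- by have [] := HU 0%N.
have UD n : (if n is m.+1 then U m else V) p /\ D n p.
  by have [_ _ _ sub] := HU n; exact: sub (Kp n).
by exists p; split=> [|n _]; [exact: (UD 0%N).1 | exact: (UD n).2].
Qed.

End LocallyCompactHausdorff.

Section DenseSection.
Context {WW W : topologicalType} {proj : WW -> W} {C : set W} {sec : set_type C -> WW}.
Hypotheses (proj_cont : continuous proj) (sec_cont : continuous sec).
Hypotheses (secK : forall c, proj (sec c) = set_val c) (sec_dense : dense (range sec)).

Lemma section_weakly_open : weakly_open sec.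
Proof.
split=> // U oU dU O [c Oc] oO.
have [G oG GO] : exists2 G : set W, open G & set_val @^-1` G = O by exact: oO.
have Gc : G (set_val c) by rewrite -[G _]/((set_val @^-1` G) c) GO.
have oprojG : open (proj @^-1` G) by move/continuousP: proj_cont; exact.
have [|y [[Gy Uy] [d _ dy]]] := sec_dense (proj @^-1` G `&` U) _ (openI oprojG oU).
  by apply: dU => //; exists (sec c); rewrite /= secK.
subst y; exists d; split=> //.
by rewrite -GO /= -secK.
Qed.

Lemma weakly_open_of_dense_section : dense C -> weakly_open proj.
Proof.
move=> dC; split=> // U oU dU O O0 oO.
have [y [Oy [c _ cy]]] := sec_dense O O0 oO; subst y.
have [G oG GO] : open (sec @^-1` O) by move/continuousP: sec_cont; exact.
have Gc : G (set_val c) by rewrite -[G _]/((set_val @^-1` G) c) GO.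
have [|p [[Gp Up] Cp]] := dC (G `&` U) _ (openI oG oU).
  by apply: dU => //; exists (set_val c).
pose q : set_type C := exist _ p (mem_set Cp).
exists (sec q); split; last by rewrite /= secK.
by have : (sec @^-1` O) q by rewrite -GO.
Qed.

End DenseSection.

Theorem proposition3p11 (WW W : topologicalType) (pi : WW -> W)
  (C : set W) (iota : set_type C -> WW) :
  hausdorff_space WW -> locally_compact [set: WW] ->
  hausdorff_space W -> locally_compact [set: W] ->
  continuous pi -> proper_map pi -> (forall x : W, exists y : WW, pi y = x) ->
  comeagre C ->
  continuous iota ->
  (forall c : set_type C, pi (iota c) = set_val c) ->
  dense (range iota) ->
  weakly_open pi /\ weakly_open iota.
Proof.
move=> _ _ hW lcW pi_cont _ _ cC iota_cont iotaK iota_dense.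
have dC : dense C := baire_comeagre_dense C (locally_compact_hausdorff_baire hW lcW) cC.
split; first exact: (weakly_open_of_dense_section pi_cont iota_cont iotaK iota_dense dC).
exact: (section_weakly_open pi_cont iota_cont iotaK iota_dense).
Qed.
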